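(* Let $A$ be a local ring with maximal ideal $\mathfrak m$ and residue field $k$, and assume $2\in A^\times$. Then $u(A)$ equals the smallest $u\in\mathbb Z_{\geq1}\cup\{\infty\}$ such that every non-singular quadratic module $(V,q)$ over $A$ with $\dim_k V/\mathfrak mV\geq u$ is universal.
   Context: A quadratic module over $A$ is $(V,q)$ with $V$ finitely generated projective, $q(ax)=a^2q(x)$ and $B_q(x,y)=q(x+y)-q(x)-q(y)$ bilinear; non-singular if $x\mapsto B_q(x,-)$ is an isomorphism $V\to\mathrm{Hom}_A(V,A)$. $(V,q)$ is isotropic if there is $x\in V\setminus\mathfrak mV$ with $q(x)=0$, anisotropic otherwise, and universal if it represents every unit, i.e. for each $a\in A^\times$ there is $x$ with $q(x)=a$. $u(A)=\sup\{\dim_k V/\mathfrak mV : (V,q)\text{ non-singular and anisotropic}\}$. *)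

From HB Require Import structures.
From mathcomp Require Import all_boot all_order all_algebra.
Set Implicit Arguments. Unset Strict Implicit. Unset Printing Implicit Defensive.
Import Order.TTheory GRing.Theory.
Local Open Scope ring_scope.

(* A commutative ring A (with 1 <> 0) is local iff its non-units form an
   ideal; it is enough that they are closed under addition. The maximal
   ideal m is then the set of non-units. *)
Definition is_local (A : comUnitRingType) : Prop :=
  forall x y : A, x \isn't a GRing.unit -> y \isn't a GRing.unit ->
    (x + y) \isn't a GRing.unit.

Section QF.
Variables (A : comUnitRingType) (n : nat).

(* V = A^n (free of rank n, so dim_k V/mV = n). *)
Definition Bq (q : 'rV[A]_n -> A) (x y : 'rV[A]_n) : A := q (x + y) - q x - q y.

Definition is_quadratic (q : 'rV[A]_n -> A) : Prop :=
  (forall (a : A) x, q (a *: x) = a ^+ 2 * q x) /\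
  (forall (a : A) x y z, Bq q (a *: x + y) z = a * Bq q x z + Bq q y z) /\
  (forall (a : A) x y z, Bq q x (a *: y + z) = a * Bq q x y + Bq q x z).

Definition is_linear_form (f : 'rV[A]_n -> A) : Prop :=
  forall (a : A) x y, f (a *: x + y) = a * f x + f y.

(* x |-> B_q(x,-) is an isomorphism V -> Hom_A(V,A) (it is A-linear by
   bilinearity of B_q, so bijectivity is what is required). *)
Definition nonsingular (q : 'rV[A]_n -> A) : Prop :=
  (forall x y, (forall z, Bq q x z = Bq q y z) -> x = y) /\
  (forall f, is_linear_form f -> exists x, forall z, Bq q x z = f z).

(* x \in mV, with m the maximal ideal (= non-units) of the local ring A *)
Definition in_mV (x : 'rV[A]_n) : Prop :=
  forall i, x 0 i \isn't a GRing.unit.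

Definition isotropic (q : 'rV[A]_n -> A) : Prop :=
  exists x, ~ in_mV x /\ q x = 0.

Definition anisotropic (q : 'rV[A]_n -> A) : Prop := ~ isotropic q.

Definition universal (q : 'rV[A]_n -> A) : Prop :=
  forall a : A, a \is a GRing.unit -> exists x, q x = a.

End QF.

(* Values in Z_{>=0} u {oo}: [Some N] is N, [None] is oo. *)

(* [is_u_invariant A e] : u(A) = e, where
   u(A) = sup { n | some non-singular anisotropic quadratic module of
                    rank n over A exists }. *)
Definition is_u_invariant (A : comUnitRingType) (e : option nat) : Prop :=
  match e with
  | Some N =>
      (exists q : 'rV[A]_N -> A, is_quadratic q /\ nonsingular q /\ anisotropic q)
      /\ (forall n (q : 'rV[A]_n -> A),
            is_quadratic q -> nonsingular q -> anisotropic q -> (n <= N)%N)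
  | None =>
      forall N, exists n (q : 'rV[A]_n -> A),
        (N < n)%N /\ is_quadratic q /\ nonsingular q /\ anisotropic q
  end.

Definition universal_from (A : comUnitRingType) (u : nat) : Prop :=
  forall n (q : 'rV[A]_n -> A),
    (u <= n)%N -> is_quadratic q -> nonsingular q -> universal q.

(* [is_universality_threshold A e] : e is the smallest u in Z_{>=1} u {oo}
   with [universal_from A u] (for u = oo the condition is vacuous). *)
Definition is_universality_threshold (A : comUnitRingType) (e : option nat) : Prop :=
  match e with
  | Some u => (1 <= u)%N /\ universal_from A u /\
              (forall v, (1 <= v)%N -> universal_from A v -> (u <= v)%N)
  | None => forall u, (1 <= u)%N -> ~ universal_from A u
  end.

From mathcomp Require Import all_boot all_order all_algebra.
From mathcomp Require Import ring zify.
From Stdlib Require Import Classical.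
Set Implicit Arguments. Unset Strict Implicit. Unset Printing Implicit Defensive.
Import GRing.Theory.
Local Open Scope ring_scope.

(* For a unit a, the form q ⊥ <-a> is non-singular (as 2 is invertible), and
   if it is isotropic then q represents a: an isotropic vector (x, t) with t a
   non-unit is corrected, using a y with B(x, y) a unit, into one whose last
   coordinate is a unit.  So a non-universal form of rank n gives an
   anisotropic one of rank n + 1.  Conversely, an anisotropic non-singular form
   of rank k + 1 has a vector w with q(w) a unit, and the orthogonal complement
   of w is a non-singular form of rank k which cannot represent -q(w).  Hence,
   for N >= 1, "anisotropic forms have rank <= N" is equivalent to "forms of
   rank >= N are universal"; since <1> is anisotropic, u(A) >= 1 and u(A) is
   exactly the universality threshold. *)

Section LinearFun.
Variables (R : pzRingType) (U V : lmodType R) (f : U -> V).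
Hypothesis lf : linear f.

Lemma linear_fun0 : f 0 = 0.
Proof.
have := lf 1 0 0; rewrite !scale1r addr0 => f0D.
by apply: (@addrI _ (f 0)); rewrite addr0 -f0D.
Qed.

Lemma linear_funD x y : f (x + y) = f x + f y.
Proof. by have := lf 1 x y; rewrite !scale1r. Qed.

Lemma linear_funZ a x : f (a *: x) = a *: f x.
Proof. by rewrite -[a *: x]addr0 lf linear_fun0 addr0. Qed.

End LinearFun.

Section QuadraticForm.
Variables (A : comUnitRingType) (n : nat) (q : 'rV[A]_n -> A).
Hypothesis hq : is_quadratic q.

Lemma quadZ a x : q (a *: x) = a ^+ 2 * q x.
Proof. by case: hq. Qed.

Lemma quad0 : q 0 = 0.
Proof. by rewrite -(scale0r 0) quadZ expr2 !mul0r. Qed.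

Lemma quadD x y : q (x + y) = q x + q y + Bq q x y.
Proof. rewrite /Bq; ring. Qed.

Lemma BqC x y : Bq q x y = Bq q y x.
Proof. rewrite /Bq (addrC x y); ring. Qed.

Lemma Bq0l z : Bq q 0 z = 0.
Proof. by rewrite /Bq add0r quad0 subr0 subrr. Qed.

Lemma Bq0r z : Bq q z 0 = 0.
Proof. by rewrite BqC Bq0l. Qed.

Lemma BqZl a x z : Bq q (a *: x) z = a * Bq q x z.
Proof. by case: hq => _ [hl _]; have := hl a x 0 z; rewrite addr0 Bq0l addr0. Qed.

Lemma BqDl x y z : Bq q (x + y) z = Bq q x z + Bq q y z.
Proof. by case: hq => _ [hl _]; have := hl 1 x y z; rewrite scale1r mul1r. Qed.

Lemma BqZr a x z : Bq q z (a *: x) = a * Bq q z x.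
Proof. by rewrite BqC BqZl BqC. Qed.

Lemma BqDr x y z : Bq q z (x + y) = Bq q z x + Bq q z y.
Proof. by rewrite BqC BqDl !(BqC z). Qed.

Lemma BqBr x y z : Bq q z (x - y) = Bq q z x - Bq q z y.
Proof. by rewrite BqDr -scaleN1r BqZr mulN1r. Qed.

Lemma Bqxx x : Bq q x x = 2 * q x.
Proof.
have -> : Bq q x x = q (2%:R *: x) - q x - q x by rewrite scaler_nat mulr2n.
rewrite quadZ; ring.
Qed.

Lemma quad_lincomb a b x y :
  q (a *: x + b *: y) = a ^+ 2 * q x + b ^+ 2 * q y + a * b * Bq q x y.
Proof. by rewrite quadD !quadZ BqZl BqZr mulrA. Qed.

Lemma Bq_suml m (F : 'I_m -> 'rV[A]_n) z :
  Bq q (\sum_(i < m) F i) z = \sum_(i < m) Bq q (F i) z.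
Proof. by apply: (big_morph (Bq q ^~ z)) => [x y|]; [apply: BqDl|apply: Bq0l]. Qed.

Lemma quad_scale_inv x a t :
  t \is a GRing.unit -> q x = a * t ^+ 2 -> q (t^-1 *: x) = a.
Proof. by move=> tu qx; rewrite quadZ qx mulrCA -exprMn mulVr // expr1n mulr1. Qed.

Lemma quad_comp k (phi : 'rV[A]_k -> 'rV[A]_n) :
  linear phi -> is_quadratic (q \o phi).
Proof.
move=> lphi; have BqP x y : Bq (q \o phi) x y = Bq q (phi x) (phi y).
  by rewrite /Bq /= linear_funD.
split; [|split].
- by move=> a x /=; rewrite linear_funZ // quadZ.
- by move=> a x y z; rewrite !BqP lphi BqDl BqZl.
- by move=> a x y z; rewrite !BqP lphi BqDr BqZr.
Qed.

Lemma unit_coord_of_not_mV (x : 'rV[A]_n) :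
  ~ in_mV x -> exists j, x 0 j \is a GRing.unit.
Proof.
case: (pickP (fun j => x 0 j \is a GRing.unit)) => [j xj _|nox hx]; first by exists j.
by case: hx => j; rewrite nox.
Qed.

Lemma Bq_unit_of_not_mV x : nonsingular q -> ~ in_mV x ->
  exists y, Bq q x y \is a GRing.unit.
Proof.
move=> [_ hsur] /unit_coord_of_not_mV [i xi].
have [y Hy] : exists y, forall z, Bq q y z = z 0 i.
  by apply: hsur => a y1 y2; rewrite !mxE.
by exists y; rewrite BqC Hy.
Qed.

End QuadraticForm.

Section NonsingularRestriction.
Variables (A : comUnitRingType) (m k : nat) (q : 'rV[A]_m -> A).
Variables (phi : 'rV[A]_k -> 'rV[A]_m) (pi : 'rV[A]_m -> 'rV[A]_k) (w : 'rV[A]_m).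
Hypotheses (hq : is_quadratic q) (hns : nonsingular q).
Hypotheses (lphi : linear phi) (lpi : linear pi) (phiK : cancel phi pi).
Hypothesis phi_pi_span : forall x, exists l, x = phi (pi x) + l *: w.
Hypothesis w_orth_phi : forall z, Bq q w (phi z) = 0.

Lemma nonsingular_restrict_orth : nonsingular (q \o phi).
Proof.
have [hinj hsur] := hns.
have BqP x y : Bq (q \o phi) x y = Bq q (phi x) (phi y) by rewrite /Bq /= linear_funD.
have Bq_span z x : Bq q (phi z) x = Bq q (phi z) (phi (pi x)).
  have [l {1}->] := phi_pi_span x.
  by rewrite BqDr // BqZr // [Bq q (phi z) w]BqC // w_orth_phi mulr0 addr0.
split.
- move=> z1 z2 H; rewrite -(phiK z1) -(phiK z2); congr pi; apply: hinj => x.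
  by have := H (pi x); rewrite !BqP !(Bq_span _ x).
- move=> f hf.
  have [y Hy] : exists y, forall x, Bq q y x = f (pi x).
    by apply: hsur => a x1 x2; rewrite lpi hf.
  by exists (pi y) => z; rewrite BqP BqC // -Bq_span BqC // Hy phiK.
Qed.

End NonsingularRestriction.

Section LocalRing.
Variable A : comUnitRingType.
Hypothesis hloc : is_local A.

Lemma unitrD_nonunit (u m : A) :
  u \is a GRing.unit -> m \isn't a GRing.unit -> (u + m) \is a GRing.unit.
Proof.
move=> hu hm; apply: contraT => H.
by have := hloc H (_ : - m \isn't a GRing.unit); rewrite unitrN addrK hu => /(_ hm).
Qed.

Lemma Bq_mV_nonunit n (q : 'rV[A]_n -> A) x w :
  is_quadratic q -> in_mV x -> Bq q x w \isn't a GRing.unit.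
Proof.
move=> hq hx; rewrite (row_sum_delta x) Bq_suml //.
apply: (big_ind (fun y : A => y \isn't a GRing.unit)) => [|y1 y2|i _].
- by rewrite unitr0.
- exact: hloc.
- by rewrite BqZl // unitrM negb_and hx.
Qed.

End LocalRing.

Section PerpNeg.
Variable A : comUnitRingType.
Hypothesis h2 : (2%:R : A) \is a GRing.unit.

Definition perp_neg n (q : 'rV[A]_n -> A) (a : A) : 'rV[A]_(n + 1) -> A :=
  fun v => q (lsubmx v) - a * rsubmx v 0 0 ^+ 2.

Variables (n : nat) (q : 'rV[A]_n -> A) (a : A).
Hypothesis hq : is_quadratic q.

Lemma Bq_perp_neg v w : Bq (perp_neg q a) v w =
  Bq q (lsubmx v) (lsubmx w) - 2 * a * (rsubmx v 0 0 * rsubmx w 0 0).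
Proof. rewrite /Bq /perp_neg !linearD /= mxE; ring. Qed.

Lemma perp_neg_quadratic : is_quadratic (perp_neg q a).
Proof.
split; [|split].
- by move=> c v; rewrite /perp_neg !linearZ /= mxE quadZ //; ring.
- move=> c x y z; rewrite !Bq_perp_neg !linearP /= !mxE BqDl // BqZl //; ring.
- move=> c x y z; rewrite !Bq_perp_neg !linearP /= !mxE BqDr // BqZr //; ring.
Qed.

Lemma perp_neg_nonsingular :
  nonsingular q -> a \is a GRing.unit -> nonsingular (perp_neg q a).
Proof.
move=> [hinj hsur] ha.
have h2a : - (2 * a) \is a GRing.unit by rewrite unitrN unitrM h2 ha.
pose e : 'rV[A]_(n + 1) := row_mx 0 (const_mx 1).
have Bq_e v : Bq (perp_neg q a) v e = - (2 * a) * rsubmx v 0 0.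
  by rewrite Bq_perp_neg row_mxKl row_mxKr Bq0r // !mxE; ring.
have Bq_inl v z : Bq (perp_neg q a) v (row_mx z 0) = Bq q (lsubmx v) z.
  by rewrite Bq_perp_neg row_mxKl row_mxKr !mxE !mulr0 subr0.
have v_split v : v = rsubmx v 0 0 *: e + row_mx (lsubmx v) 0.
  rewrite scale_row_mx add_row_mx scaler0 addr0 add0r -{1}[v]hsubmxK.
  by congr row_mx; apply/rowP => i; rewrite (ord1 i) !mxE mulr1.
split.
- move=> v v' H; rewrite [v]v_split [v']v_split.
  have -> : lsubmx v = lsubmx v' by apply: hinj => z; rewrite -!Bq_inl.
  congr (_ *: _ + _); apply: (mulrI h2a); rewrite -!Bq_e; exact: H.
- move=> f hf.
  have [x0 Hx0] : exists x0, forall z, Bq q x0 z = f (row_mx z 0).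
    by apply: hsur => c y1 y2; rewrite -hf scale_row_mx add_row_mx scaler0 addr0.
  exists (row_mx x0 (const_mx ((- (2 * a))^-1 * f e))) => z.
  rewrite [in RHS](v_split z) hf -Hx0.
  rewrite Bq_perp_neg row_mxKl row_mxKr [const_mx _ 0 0]mxE.
  have -> : 2 * a * ((- (2 * a))^-1 * f e * rsubmx z 0 0) =
            - (- (2 * a) * (- (2 * a))^-1) * f e * rsubmx z 0 0 by ring.
  by rewrite mulrV //; ring.
Qed.

Lemma perp_neg_isotropic_represents : is_local A -> nonsingular q ->
  isotropic (perp_neg q a) -> exists x, q x = a.
Proof.
move=> hloc hns [v [Hv qv0]].
set x := lsubmx v; set t := rsubmx v 0 0.
have qx : q x = a * t ^+ 2 by apply/eqP; rewrite -subr_eq0; apply/eqP.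
have [tu|tN] := boolP (t \is a GRing.unit).
  by exists (t^-1 *: x); apply: quad_scale_inv.
have xN : ~ in_mV x.
  move=> hx; apply: Hv => j; case: (split_ordP j) => i ->.
  - by have := hx i; rewrite mxE.
  - by move: tN; rewrite /t (ord1 i) mxE.
have [y bu] := Bq_unit_of_not_mV hns xN.
(* The coefficients are chosen so that the cross terms recombine into a
   square, and al * t + be = - Bq q x y modulo the maximal ideal. *)
pose al := q y - a; pose be := 2 * a * t - Bq q x y.
have q_comb : q (al *: x + be *: y) = a * (al * t + be) ^+ 2.
  by rewrite quad_lincomb // qx /al /be; ring.
have s_unit : (al * t + be) \is a GRing.unit.
  have -> : al * t + be = - Bq q x y + (al + 2 * a) * t by rewrite /be; ring.
  by apply: unitrD_nonunit; rewrite ?unitrN // unitrM negb_and tN orbT.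
by exists ((al * t + be)^-1 *: (al *: x + be *: y)); apply: quad_scale_inv.
Qed.

End PerpNeg.

Section OrthComplement.
Variables (A : comUnitRingType) (k : nat) (q : 'rV[A]_(k + 1) -> A).
Variable w : 'rV[A]_(k + 1).

Definition orth_embed (z : 'rV[A]_k) : 'rV[A]_(k + 1) :=
  row_mx z 0 - (Bq q w (row_mx z 0) / Bq q w w) *: w.

Definition orth_coord (x : 'rV[A]_(k + 1)) : 'rV[A]_k :=
  lsubmx (x - (rsubmx x 0 0 / rsubmx w 0 0) *: w).

Hypotheses (hq : is_quadratic q) (h2 : (2%:R : A) \is a GRing.unit).
Hypotheses (qw_unit : q w \is a GRing.unit) (lw_unit : rsubmx w 0 0 \is a GRing.unit).

Lemma Bqww_unit : Bq q w w \is a GRing.unit.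
Proof. by rewrite Bqxx // unitrM h2 qw_unit. Qed.

Lemma orth_embed_linear : linear orth_embed.
Proof.
move=> a z1 z2; rewrite /orth_embed.
have -> : row_mx (a *: z1 + z2) 0 = a *: row_mx z1 0 + row_mx z2 (0 : 'rV_1).
  by rewrite scale_row_mx add_row_mx scaler0 addr0.
rewrite BqDr // BqZr //; move: (row_mx z1 0) (row_mx z2 0) => r1 r2.
by apply/matrixP => i j; rewrite !mxE; ring.
Qed.

Lemma orth_coord_linear : linear orth_coord.
Proof.
move=> a x1 x2; rewrite /orth_coord -linearP; congr lsubmx.
by apply/matrixP => i j; rewrite !mxE; ring.
Qed.

Lemma Bq_orth_embed z : Bq q w (orth_embed z) = 0.
Proof. by rewrite BqBr // BqZr // divrK ?Bqww_unit // subrr. Qed.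

Lemma orth_embedK : cancel orth_embed orth_coord.
Proof.
move=> z; rewrite /orth_coord /orth_embed.
have -> : rsubmx (row_mx z 0 - (Bq q w (row_mx z 0) / Bq q w w) *: w) 0 0 /
    rsubmx w 0 0 = - (Bq q w (row_mx z 0) / Bq q w w).
  rewrite linearB linearZ /= row_mxKr sub0r.
  by rewrite [(- _ : 'rV_1) 0 0]mxE [(_ *: _ : 'rV_1) 0 0]mxE mulNr mulrK.
by rewrite scaleNr opprK subrK row_mxKl.
Qed.

Lemma orth_embed_span x : exists l, x = orth_embed (orth_coord x) + l *: w.
Proof.
have x_row : row_mx (orth_coord x) 0 = x - (rsubmx x 0 0 / rsubmx w 0 0) *: w.
  rewrite -[RHS]hsubmxK; congr row_mx; apply/rowP => i.
  rewrite (ord1 i) linearB linearZ /= !mxE divrK ?subrr //.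
  by move: lw_unit; rewrite mxE.
exists (Bq q w (row_mx (orth_coord x) 0) / Bq q w w + rsubmx x 0 0 / rsubmx w 0 0).
by rewrite /orth_embed x_row; apply/matrixP => i j; rewrite !mxE; ring.
Qed.

Lemma orth_complement_nonsingular : nonsingular q -> nonsingular (q \o orth_embed).
Proof.
move=> hns; apply: (nonsingular_restrict_orth hq hns orth_embed_linear
  orth_coord_linear orth_embedK orth_embed_span Bq_orth_embed).
Qed.

Lemma orth_complement_not_universal :
  is_local A -> anisotropic q -> ~ universal (q \o orth_embed).
Proof.
move=> hloc han /(_ (- q w)); rewrite unitrN => /(_ qw_unit) [z /= qz].
have isoN : in_mV (orth_embed z + w).
  apply: NNPP => H; apply: han; exists (orth_embed z + w); split => //.
  by rewrite quadD // qz BqC Bq_orth_embed addr0 addNr.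
have := Bq_mV_nonunit hloc w hq isoN.
by rewrite BqDl // BqC Bq_orth_embed add0r Bqww_unit.
Qed.

End OrthComplement.

Section Threshold.
Variable A : comUnitRingType.
Hypotheses (hloc : is_local A) (h2 : (2%:R : A) \is a GRing.unit).

Lemma exists_unit_value_unit_last k (q : 'rV[A]_(k + 1) -> A) :
  is_quadratic q -> nonsingular q ->
  exists w, q w \is a GRing.unit /\ rsubmx w 0 0 \is a GRing.unit.
Proof.
move=> hq [_ hsur].
have [y Hy] : exists y, forall x, Bq q y x = rsubmx x 0 0.
  by apply: hsur => a x1 x2; rewrite linearP /= !mxE.
pose e : 'rV[A]_(k + 1) := row_mx 0 (const_mx 1).
have le : rsubmx e 0 0 = 1 by rewrite row_mxKr mxE.
have ly : rsubmx y 0 0 = 2 * q y by rewrite -Hy Bqxx.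
have [qeU|qeN] := boolP (q e \is a GRing.unit); first by exists e; rewrite le unitr1.
have [qyU|qyN] := boolP (q y \is a GRing.unit).
  by exists y; rewrite ly unitrM h2 qyU.
exists (e + y); split.
- rewrite quadD // BqC Hy le addrC.
  by apply: unitrD_nonunit => //; [exact: unitr1 | exact: hloc].
- rewrite linearD /= mxE le ly; apply: unitrD_nonunit => //; first exact: unitr1.
  by rewrite unitrM negb_and qyN orbT.
Qed.

Lemma anisotropic_complement k (q : 'rV[A]_(k + 1) -> A) :
  is_quadratic q -> nonsingular q -> anisotropic q ->
  exists q' : 'rV[A]_k -> A, is_quadratic q' /\ nonsingular q' /\ ~ universal q'.
Proof.
move=> hq hns han; have [w [qwU lwU]] := exists_unit_value_unit_last hq hns.
exists (q \o orth_embed q w); split; last split.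
- exact/quad_comp/orth_embed_linear.
- exact: orth_complement_nonsingular.
- exact: orth_complement_not_universal.
Qed.

Definition has_anisotropic n :=
  exists q : 'rV[A]_n -> A, is_quadratic q /\ nonsingular q /\ anisotropic q.

Definition anisotropic_bounded N := forall n, has_anisotropic n -> (n <= N)%N.

Lemma has_anisotropic1 : has_anisotropic 1.
Proof.
pose q0 (_ : 'rV[A]_0) : A := 0.
have hq0 : is_quadratic q0.
  by split; [move=> a x; rewrite /q0 mulr0|split=> *; rewrite /Bq /q0 !subr0 mulr0 addr0].
have hns0 : nonsingular q0.
  split; first by move=> x y _; rewrite [x]thinmx0 [y]thinmx0.
  move=> f hf; exists 0 => z; rewrite [z]thinmx0 /Bq /q0 !subr0.
  exact/esym/(linear_fun0 (f := f : 'rV[A]_0 -> A^o)).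
have hm1 : (-1 : A) \is a GRing.unit by rewrite unitrN unitr1.
exists (perp_neg q0 (-1)); split; first exact: (perp_neg_quadratic (-1) hq0).
split; first exact: (perp_neg_nonsingular h2 hq0 hns0 hm1).
move=> /(perp_neg_isotropic_represents hq0 hloc hns0) [x /eqP].
by rewrite /q0 eq_sym oppr_eq0 oner_eq0.
Qed.

Lemma perp_neg_anisotropic n (q : 'rV[A]_n -> A) a :
  is_quadratic q -> nonsingular q -> a \is a GRing.unit -> ~ (exists x, q x = a) ->
  has_anisotropic (n + 1).
Proof.
move=> hq hns ha hna; exists (perp_neg q a); split; first exact: perp_neg_quadratic.
split; first exact: perp_neg_nonsingular.
by move=> /(perp_neg_isotropic_represents hq hloc hns).
Qed.

Lemma not_universal_from_anisotropic u :
  ~ universal_from A u -> exists2 n, (u < n)%N & has_anisotropic n.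
Proof.
move=> hnot; apply: NNPP => hno; apply: hnot => n q hn hq hns a ha.
apply: NNPP => hna; apply: hno; exists (n + 1)%N; first by rewrite addn1 ltnS.
exact: perp_neg_anisotropic hna.
Qed.

Lemma universal_from_bounded N : anisotropic_bounded N -> universal_from A N.
Proof.
move=> hb n q hn hq hns a ha; apply: NNPP => hna.
by have := hb _ (perp_neg_anisotropic hq hns ha hna); rewrite addn1 ltnNge hn.
Qed.

Lemma bounded_universal_from v :
  (1 <= v)%N -> universal_from A v -> anisotropic_bounded v.
Proof.
move=> hv hu n [q [hq [hns han]]]; rewrite leqNgt; apply/negP => hlt.
have [k nE] : exists k, n = (k + 1)%N by exists n.-1; lia.
subst n; have [q' [hq' [hns' hnu]]] := anisotropic_complement hq hns han.
by apply: hnu; apply: (hu k q') => //; lia.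
Qed.

End Threshold.

Theorem propositionA2 (A : comUnitRingType) (hloc : is_local A)
  (h2 : (2%:R : A) \is a GRing.unit) (e : option nat) :
  is_u_invariant A e <-> is_universality_threshold A e.
Proof.
case: e => [N|]; split.
- move=> [hN hb].
  have hbN : anisotropic_bounded A N.
    by move=> n [q [hq [hns han]]]; exact: hb n q hq hns han.
  split; first exact: hbN _ (has_anisotropic1 hloc h2).
  split; first exact: universal_from_bounded.
  by move=> v hv hu; apply: (bounded_universal_from hloc h2 hv hu).
- move=> [hN [hu hmin]]; have hbN := bounded_universal_from hloc h2 hN hu.
  split; last by move=> n q hq hns han; apply: hbN; exists q.
  have [N1|N_gt1] := leqP N 1.
    have -> : N = 1%N by lia.
    exact: has_anisotropic1.
  have hN1 : (1 <= N.-1)%N by lia.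
  have hnot : ~ universal_from A N.-1 by move=> /(hmin _ hN1); lia.
  have [n hn han] := not_universal_from_anisotropic hloc h2 hnot.
  have nN : n = N by have := hbN _ han; lia.
  by rewrite -nN.
- move=> hinf u hu huniv; have [n [q [hlt hanq]]] := hinf u.
  by have := bounded_universal_from hloc h2 hu huniv (ex_intro _ q hanq); lia.
- move=> hnot N.
  have [n hn [q hq]] := not_universal_from_anisotropic hloc h2 (hnot N.+1 isT).
  by exists n, q; split; first lia.
Qed.
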